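(* Let $B\in\mathbb{R}^{n\times n}$ be a nonsingular $M$-matrix and $C\in\mathbb{R}^{n\times n}$ an $M$-matrix such that $B^{-1}C\ge 0$, and suppose that $B-C-I$ is a nonsingular $M$-matrix. Let $\Phi$ be the maximal nonpositive solvent of $X^2+BX+C=0$ and $\Psi$ the maximal nonpositive solvent of the dual equation $CY^2+BY+I=0$ (these exist under the stated hypotheses). Let $u\in\mathbb{R}^n$ be any positive vector such that $v:=(B-C-I)u>0$. Then: (a) $\Phi\le -B^{-1}C\le 0$, $-\Phi u\le u-B^{-1}v$, $\Psi\le -B^{-1}\le 0$, and $-\Psi u\le u-B^{-1}v$; (b) $\rho(\Phi)<1$ and $\rho(\Psi)<1$; (c) $I-\Phi\Psi$ and $I-\Psi\Phi$ are nonsingular $M$-matrices.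
   Context: $\rho(\cdot)$ denotes spectral radius. Inequalities between matrices and vectors are entrywise; a vector is positive if all entries are positive. A matrix is nonpositive if all its entries are $\le 0$. A solvent of a matrix equation is a matrix solution; the maximal nonpositive solvent is a nonpositive solvent $\Phi$ with $X\le\Phi$ entrywise for every nonpositive solvent $X$. A $Z$-matrix is a real square matrix with nonpositive off-diagonal entries; a $Z$-matrix $A=sI-N$ with $N\ge 0$ is an $M$-matrix if $s\ge\rho(N)$ and a nonsingular $M$-matrix if $s>\rho(N)$. *)

From HB Require Import structures.
From mathcomp Require Import all_boot all_order all_algebra.
From mathcomp Require Import complex.
Set Implicit Arguments. Unset Strict Implicit. Unset Printing Implicit Defensive.
Import Order.TTheory GRing.Theory Num.Theory.
Local Open Scope ring_scope.

Definition mxle (R : rcfType) m n (A B : 'M[R]_(m, n)) : Prop :=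
  forall i j, A i j <= B i j.
Definition mxpos (R : rcfType) m n (A : 'M[R]_(m, n)) : Prop :=
  forall i j, 0 < A i j.

(* Complex eigenvalues (with multiplicity) of a real square matrix: the
   roots of its characteristic polynomial over R[i]. *)
Definition eigsC (R : rcfType) n (A : 'M[R]_n) : seq R[i] :=
  proj1_sig (closed_field_poly_normal (char_poly (map_mx (real_complex R) A))).

(* Spectral radius: max modulus of the complex eigenvalues (0 if n = 0). *)
Definition spectral_radius (R : rcfType) n (A : 'M[R]_n) : R :=
  \big[Num.max/0]_(z <- eigsC A) ComplexField.Normc.normc z.

Definition Mmatrix (R : rcfType) n (A : 'M[R]_n) : Prop :=
  exists (s : R) (N : 'M[R]_n),
    mxle 0 N /\ A = s%:M - N /\ spectral_radius N <= s.
Definition nonsingular_Mmatrix (R : rcfType) n (A : 'M[R]_n) : Prop :=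
  exists (s : R) (N : 'M[R]_n),
    mxle 0 N /\ A = s%:M - N /\ spectral_radius N < s.

Definition max_nonpos_solvent_quad (R : rcfType) n (B C Phi : 'M[R]_n) : Prop :=
  [/\ Phi *m Phi + B *m Phi + C = 0, mxle Phi 0 &
      forall X : 'M[R]_n, X *m X + B *m X + C = 0 -> mxle X 0 -> mxle X Phi].

Definition max_nonpos_solvent_dual (R : rcfType) n (B C Psi : 'M[R]_n) : Prop :=
  [/\ C *m (Psi *m Psi) + B *m Psi + 1%:M = 0, mxle Psi 0 &
      forall Y : 'M[R]_n, C *m (Y *m Y) + B *m Y + 1%:M = 0 -> mxle Y 0 ->
        mxle Y Psi].

From HB Require Import structures.
From mathcomp Require Import all_boot all_order all_algebra.
From mathcomp Require Import complex.
From mathcomp Require Import boolp classical_sets reals.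
From mathcomp Require Import ring lra.
Import Order.TTheory GRing.Theory Num.Theory.
Local Open Scope ring_scope.

(* Since B is a nonsingular M-matrix it is semipositive, hence B^-1 >= 0.
   Multiplying by B^-1, X |-> -X turns the nonpositive solvents of
   X^2 + B X + C = 0 into the nonnegative fixed points of
   L |-> B^-1 L^2 + B^-1 C, and those of C Y^2 + B Y + I = 0 into the fixed
   points of L |-> B^-1 C L^2 + B^-1.  In both cases the coefficients add up
   to P + Q = B^-1 + B^-1 C, and (P + Q) u = u - B^-1 v =: b < u.  The
   iterates X_k of the monotone iteration from 0 satisfy X_k u <= b, so they
   converge to a fixed point L with L u <= b; maximality gives -Phi <= L,
   hence |Phi| u = -Phi u <= b < u, and a weighted row-sum argument gives
   rho(Phi) < 1.  The same holds for Psi, and for the nonnegative products,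
   as Phi Psi u <= -Phi b <= -Phi u <= b. *)

Set Implicit Arguments.
Unset Strict Implicit.
Unset Printing Implicit Defensive.

Section EntrywiseOrder.
Variable R : rcfType.

Lemma mxle_trans m n (A B C : 'M[R]_(m, n)) : mxle A B -> mxle B C -> mxle A C.
Proof. by move=> AB BC i j; apply: le_trans (AB i j) (BC i j). Qed.

Lemma mxleD m n (A B C D : 'M[R]_(m, n)) :
  mxle A B -> mxle C D -> mxle (A + C) (B + D).
Proof. by move=> AB CD i j; rewrite !mxE lerD. Qed.

Lemma mxleN m n (A B : 'M[R]_(m, n)) : mxle A B -> mxle (- B) (- A).
Proof. by move=> AB i j; rewrite !mxE lerN2. Qed.

Lemma mxge0P m n (A : 'M[R]_(m, n)) : mxle 0 A <-> forall i j, 0 <= A i j.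
Proof. by split=> A0 i j; move: (A0 i j); rewrite mxE. Qed.

Lemma mxle0P m n (A : 'M[R]_(m, n)) : mxle A 0 <-> forall i j, A i j <= 0.
Proof. by split=> A0 i j; move: (A0 i j); rewrite mxE. Qed.

Lemma mxle_subr_ge0 m n (A B : 'M[R]_(m, n)) : mxle 0 (B - A) <-> mxle A B.
Proof. by split=> AB i j; move: (AB i j); rewrite !mxE subr_ge0. Qed.

Lemma mxle_oppr_ge0 m n (A : 'M[R]_(m, n)) : mxle 0 (- A) <-> mxle A 0.
Proof. by split=> A0 i j; move: (A0 i j); rewrite !mxE oppr_ge0. Qed.

Lemma mxle_oppr_le0 m n (A : 'M[R]_(m, n)) : mxle (- A) 0 <-> mxle 0 A.
Proof. by split=> A0 i j; move: (A0 i j); rewrite !mxE oppr_le0. Qed.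

Lemma mxposW m n (A : 'M[R]_(m, n)) : mxpos A -> mxle 0 A.
Proof. by move=> A0 i j; rewrite mxE ltW. Qed.

Lemma mxle01 n : mxle 0 (1%:M : 'M[R]_n).
Proof. by move=> i j; rewrite !mxE ler0n. Qed.

Lemma addmx_ge0 m n (A B : 'M[R]_(m, n)) :
  mxle 0 A -> mxle 0 B -> mxle 0 (A + B).
Proof. by move=> A0 B0; rewrite -[0 : 'M_(m, n)]addr0; apply: mxleD. Qed.

Lemma mulmx_ge0 m n p (A : 'M[R]_(m, n)) (B : 'M[R]_(n, p)) :
  mxle 0 A -> mxle 0 B -> mxle 0 (A *m B).
Proof.
move=> /mxge0P A0 /mxge0P B0; apply/mxge0P => i j; rewrite mxE.
by apply: sumr_ge0 => k _; rewrite mulr_ge0.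
Qed.

Lemma mulmx_le0 m n p (A : 'M[R]_(m, n)) (B : 'M[R]_(n, p)) :
  mxle A 0 -> mxle B 0 -> mxle 0 (A *m B).
Proof.
move=> /mxle_oppr_ge0 A0 /mxle_oppr_ge0 B0.
by rewrite -[A *m B]opprK -mulNmx -mulmxN; apply: mulmx_ge0.
Qed.

Lemma mxle_mul2l m n p (A : 'M[R]_(m, n)) (B C : 'M[R]_(n, p)) :
  mxle 0 A -> mxle B C -> mxle (A *m B) (A *m C).
Proof.
move=> A0 /mxle_subr_ge0 BC; apply/mxle_subr_ge0.
by rewrite -mulmxBr; apply: mulmx_ge0.
Qed.

Lemma mxle_mul2r m n p (A B : 'M[R]_(m, n)) (C : 'M[R]_(n, p)) :
  mxle 0 C -> mxle A B -> mxle (A *m C) (B *m C).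
Proof.
move=> C0 /mxle_subr_ge0 AB; apply/mxle_subr_ge0.
by rewrite -mulmxBl; apply: mulmx_ge0.
Qed.

Lemma mxle_addZ_gt0 m n (A B M : 'M[R]_(m, n)) :
  mxle 0 M -> (forall e, 0 < e -> mxle A (B + e *: M)) -> mxle A B.
Proof.
move=> /mxge0P M0 AB i j; apply/ler_addgt0Pr => e e0.
have M1 : 0 < M i j + 1 by rewrite ltr_wpDl.
have := AB _ (divr_gt0 e0 M1) i j; rewrite !mxE => /le_trans; apply.
by rewrite lerD2l mulrAC ler_pdivrMr // ler_pM2l // lerDl.
Qed.

Lemma mulmx_le0_mulu n (F G : 'M[R]_n) (b u : 'cV[R]_n) :
  mxle F 0 -> mxle (- (F *m u)) b -> mxle (- (G *m u)) b -> mxle b u ->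
  mxle (F *m G *m u) b.
Proof.
move=> /mxle_oppr_ge0 F0 Fu Gu bu.
have -> : F *m G *m u = - F *m - (G *m u) by rewrite mulNmx mulmxN opprK mulmxA.
apply: mxle_trans (mxle_mul2l F0 Gu) (mxle_trans (mxle_mul2l F0 bu) _).
by rewrite mulNmx.
Qed.

End EntrywiseOrder.

Section ZMatrices.
Variable R : rcfType.

Definition Zmatrix n (A : 'M[R]_n) := forall i j, i != j -> A i j <= 0.

Definition semipositive n (A : 'M[R]_n) :=
  exists2 x : 'cV[R]_n, mxpos x & mxpos (A *m x).

Lemma Zmatrix_mul_le0 n (A : 'M[R]_n) (z : 'cV[R]_n) i :
  Zmatrix A -> mxle 0 z -> z i 0 = 0 -> (A *m z) i 0 <= 0.
Proof.
move=> ZA /mxge0P z0 zi0; rewrite mxE (bigD1 i) //= zi0 mulr0 add0r.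
by apply: sumr_le0 => k ki; rewrite mulr_le0_ge0 // ZA // eq_sym.
Qed.

Lemma Zmatrix_mxpos n (A : 'M[R]_n) (y : 'cV[R]_n) :
  Zmatrix A -> mxle 0 y -> mxpos (A *m y) -> mxpos y.
Proof.
move=> ZA y0 Ay0 i j; rewrite [j]ord1; have /mxge0P/(_ i 0) := y0.
rewrite le_eqVlt => /predU1P[yi0|//].
by have := Ay0 i 0; rewrite ltNge Zmatrix_mul_le0.
Qed.

Section Semipositive.
Variables (n : nat) (A : 'M[R]_n).
Hypotheses (ZA : Zmatrix A) (sA : semipositive A).

(* Were [Y i j < 0], add to the column [Y _ j] the least multiple [c x] making
   it nonnegative: the sum vanishes at some row [i0], where [A] maps it both
   to something [<= 0] and to [(A Y) i0 j + c (A x) i0 > 0]. *)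
Lemma Zmatrix_monotone p (Y : 'M[R]_(n, p)) : mxle 0 (A *m Y) -> mxle 0 Y.
Proof.
case: sA => x x0 Ax0 /mxge0P AY0; apply/mxge0P => i j.
rewrite leNgt; apply/negP => Yij0.
have xk0 k : 0 < x k 0 := x0 k 0.
pose F k := Y k j / x k 0.
have [i0 _ Fmin] := @arg_minP _ _ _ i xpredT F erefl.
pose c := - F i0.
have c0 : 0 < c.
  by rewrite oppr_gt0 (le_lt_trans (Fmin i erefl)) // ltr_pdivrMr // mul0r.
pose z := col j Y + c *: x.
have z0 : mxle 0 z.
  apply/mxge0P => k l; rewrite [l]ord1 !mxE.
  by rewrite /c mulNr subr_ge0 -ler_pdivlMr //; apply: Fmin.
have zi0 : z i0 0 = 0 by rewrite !mxE /c /F mulNr divfK ?gt_eqF // subrr.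
have := Zmatrix_mul_le0 ZA z0 zi0; apply/negP; rewrite -ltNge.
have := AY0 i0 j; have := Ax0 i0 0.
rewrite mulmxDr colE mulmxA -colE -scalemxAr !mxE => Ax_gt0 AY_ge0.
by rewrite ltr_wpDl // mulr_gt0.
Qed.

Lemma Zmatrix_unitmx : A \in unitmx.
Proof.
rewrite unitmxE unitfE -det_tr; apply/negP => /det0P[v /eqP vn0 vA0]; apply: vn0.
have Av0 : A *m v^T = 0 by rewrite -[A]trmxK -trmx_mul vA0 trmx0.
have v0 : mxle 0 v^T by apply: Zmatrix_monotone; rewrite Av0.
have Nv0 : mxle 0 (- v^T) by apply: Zmatrix_monotone; rewrite mulmxN Av0 oppr0.
apply/matrixP => a b; apply/eqP; rewrite mxE eq_le.
by have := v0 b a; have := Nv0 b a; rewrite !mxE oppr_ge0 => -> ->.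
Qed.

Lemma Zmatrix_invmx_ge0 : mxle 0 (invmx A).
Proof.
by apply: Zmatrix_monotone; rewrite mulmxV ?Zmatrix_unitmx //; apply: mxle01.
Qed.

End Semipositive.
End ZMatrices.

Lemma char_poly_trmx (K : comNzRingType) n (A : 'M[K]_n) :
  char_poly A^T = char_poly A.
Proof.
rewrite /char_poly -det_tr /char_poly_mx linearB /= tr_scalar_mx.
by congr (\det (_ - _)); apply/matrixP => i j; rewrite !mxE.
Qed.

Section SpectralRadius.
Local Open Scope complex_scope.
Variable R : rcfType.
Local Notation normc := (@ComplexField.Normc.normc R).
Local Notation toC := (real_complex R).

Lemma normc_ge0 (z : R[i]) : 0 <= normc z.
Proof. by case: z => a b; rewrite sqrtr_ge0. Qed.

Lemma normc_gt0 (z : R[i]) : z != 0 -> 0 < normc z.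
Proof.
move=> z0; rewrite lt_def normc_ge0 andbT.
by apply: contra z0 => /eqP/ComplexField.Normc.eq0_normc ->.
Qed.

Lemma normc_real (a : R) : normc a%:C = `|a|.
Proof. by rewrite /= expr0n addr0 sqrtr_sqr. Qed.

Lemma normc_sum (I : finType) (F : I -> R[i]) :
  normc (\sum_i F i) <= \sum_i normc (F i).
Proof.
elim/big_rec2: _ => [|i y1 y2 _ IH]; first by rewrite ComplexField.Normc.normc0.
exact: le_trans (le_normcD _ _) (lerD _ IH).
Qed.

Lemma eigsC_eigenvalue n (A : 'M[R]_n) z :
  (z \in eigsC A) = eigenvalue (map_mx toC A) z.
Proof.
rewrite eigenvalue_root_char /eigsC; case: closed_field_poly_normal => r /= ->.
by rewrite (monicP (char_poly_monic _)) scale1r root_prod_XsubC.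
Qed.

Lemma eigsC_trmx n (A : 'M[R]_n) : eigsC A^T =i eigsC A.
Proof.
move=> z; rewrite !eigsC_eigenvalue !eigenvalue_root_char -map_trmx.
by rewrite char_poly_trmx.
Qed.

Lemma normc_le_spectral_radius n (A : 'M[R]_n) z :
  z \in eigsC A -> normc z <= spectral_radius A.
Proof. by move=> Az; apply: le_bigmax_seq. Qed.

Lemma spectral_radius_lt_unitmx n (N : 'M[R]_n) t :
  spectral_radius N < t -> t%:M - N \in unitmx.
Proof.
move=> Nt; rewrite unitmxE unitfE; apply/negP => /det0P[v v0 vNt].
have : eigenvalue N t.
  apply/eigenvalueP; exists v => //.
  by apply/eqP; rewrite -mul_mx_scalar eq_sym -subr_eq0 -mulmxBr vNt.
rewrite -(eigenvalue_map toC) -eigsC_eigenvalue.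
move/normc_le_spectral_radius; rewrite normc_real => /le_lt_trans/(_ Nt).
by rewrite ltNge ler_norm.
Qed.

(* A row eigenvector [w] of [A^T] is a column eigenvector of [A]; compare it
   with [u] at the row where [|w i| / u i] is largest. *)
Lemma spectral_radius_lt1 n (A : 'M[R]_n) (u : 'cV[R]_n) :
  mxpos u -> (forall i, \sum_j `|A i j| * u j 0 < u i 0) ->
  spectral_radius A < 1.
Proof.
move=> u0 Au; rewrite /spectral_radius big_seq; apply: bigmax_lt => // z.
rewrite -eigsC_trmx eigsC_eigenvalue -map_trmx => /eigenvalueP[w wA w0].
have Aw i : \sum_j (A i j)%:C * w 0 j = z * w 0 i.
  have /matrixP/(_ 0 i) := wA; rewrite !mxE => <-.
  by apply: eq_bigr => j _; rewrite !mxE mulrC.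
have [j0 wj0] : exists j, w 0 j != 0.
  apply/existsP; apply: contraR w0 => /existsPn wj0; apply/eqP/matrixP => a b.
  by rewrite [a]ord1 mxE; apply/eqP; rewrite -[_ == _]negbK wj0.
have uk0 k : 0 < u k 0 := u0 k 0.
pose F j := normc (w 0 j) / u j 0.
have [i _ Fmax] := @arg_maxP _ _ _ j0 xpredT F erefl.
have Fi0 : 0 < F i by rewrite (lt_le_trans _ (Fmax j0 erefl)) ?divr_gt0 ?normc_gt0.
have wi : normc (w 0 i) = F i * u i 0 by rewrite divfK ?gt_eqF.
have : normc z * normc (w 0 i) < normc (w 0 i).
  rewrite -ComplexField.Normc.normcM -Aw (le_lt_trans (normc_sum _)) //.
  rewrite wi (@le_lt_trans _ _ (F i * \sum_j `|A i j| * u j 0)) ?ltr_pM2l //.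
  rewrite mulr_sumr; apply: ler_sum => j _.
  rewrite ComplexField.Normc.normcM normc_real mulrCA ler_wpM2l //.
  by rewrite -ler_pdivrMr //; apply: Fmax.
have wi0 : 0 < normc (w 0 i) by rewrite wi mulr_gt0.
by rewrite -[X in _ < X -> _]mul1r ltr_pM2r.
Qed.

Lemma spectral_radius_lt1_ge0 n (A : 'M[R]_n) (u : 'cV[R]_n) :
  mxle 0 A -> mxpos u -> (forall i, (A *m u) i 0 < u i 0) ->
  spectral_radius A < 1.
Proof.
move=> /mxge0P A0 u0 Au; apply: (spectral_radius_lt1 u0) => i.
by rewrite (le_lt_trans _ (Au i)) // mxE; under eq_bigr do rewrite ger0_norm //.
Qed.

Lemma spectral_radius_lt1_le0 n (A : 'M[R]_n) (u : 'cV[R]_n) :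
  mxle A 0 -> mxpos u -> (forall i, (- (A *m u)) i 0 < u i 0) ->
  spectral_radius A < 1.
Proof.
move=> /mxle0P A0 u0 Au; apply: (spectral_radius_lt1 u0) => i.
rewrite (le_lt_trans _ (Au i)) // !mxE -sumrN.
by under eq_bigr do rewrite ler0_norm // mulNr.
Qed.

Lemma nonsingular_Mmatrix_1sub n (N : 'M[R]_n) (u : 'cV[R]_n) :
  mxle 0 N -> mxpos u -> (forall i, (N *m u) i 0 < u i 0) ->
  nonsingular_Mmatrix (1%:M - N).
Proof.
move=> N0 u0 Nu; exists 1, N; do 2!split=> //.
exact: spectral_radius_lt1_ge0 Nu.
Qed.

End SpectralRadius.

Section SemipositiveShift.
Variable R : realType.

Lemma mul_shift_mxE n (N : 'M[R]_n) t (x : 'cV[R]_n) i j :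
  ((t%:M - N) *m x) i j = t * x i j - (N *m x) i j.
Proof. by rewrite mulmxBl mul_scalar_mx !mxE. Qed.

Lemma Zmatrix_shift n (N : 'M[R]_n) t : mxle 0 N -> Zmatrix (t%:M - N).
Proof.
move=> /mxge0P N0 i j ij; rewrite !mxE (negPf ij) mulr0n sub0r oppr_le0.
exact: N0.
Qed.

Lemma semipositive_shift_le n (N : 'M[R]_n) t t' :
  t <= t' -> semipositive (t%:M - N) -> semipositive (t'%:M - N).
Proof.
move=> tt' [x x0 Nx0]; exists x => // i j; have := Nx0 i j.
rewrite !mul_shift_mxE; have := ler_wpM2r (ltW (x0 i j)) tt'; lra.
Qed.

Lemma semipositive_shift_large n (N : 'M[R]_n) :
  mxle 0 N -> semipositive ((1 + \sum_i \sum_j N i j)%:M - N).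
Proof.
move=> /mxge0P N0; exists (const_mx 1) => i j; first by rewrite mxE ltr01.
have row_le : \sum_k N i k <= \sum_i \sum_j N i j.
  by rewrite [X in _ <= X](bigD1 i) //= lerDl sumr_ge0 // => k _; rewrite sumr_ge0.
rewrite mul_shift_mxE mxE mulr1.
have -> : (N *m const_mx 1) i j = \sum_k N i k.
  by rewrite mxE; apply: eq_bigr => k _; rewrite mxE mulr1.
lra.
Qed.

Lemma fixpoint_max_entry_le n (F : 'M[R]_n) (y : 'cV[R]_n) d i :
  0 < d -> mxle 0 y -> (forall j, y j 0 <= y i 0) ->
  y = F *m (const_mx 1 - d *: y) ->
  y i 0 <= (1 + \sum_k \sum_j `|F k j|) * (1 + d * y i 0).
Proof.
move=> d0 /mxge0P y0 ymax yF; rewrite {1}yF mxE.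
apply: le_trans (_ : \sum_j `|F i j| * (1 + d * y i 0) <= _).
  apply: ler_sum => j _; rewrite (le_trans (ler_norm _)) // normrM !mxE.
  rewrite ler_wpM2l // ler_norml.
  have := ler_wpM2l (ltW d0) (ymax j); have := mulr_ge0 (ltW d0) (y0 j 0); lra.
rewrite -mulr_suml ler_wpM2r ?addr_ge0 ?mulr_ge0 ?(ltW d0) //.
rewrite ler_wpDl // [X in _ <= X](bigD1 i) //= lerDl.
by rewrite sumr_ge0 // => k _; rewrite sumr_ge0.
Qed.

(* With [F := (t I - N)^-1] and [d := 1 / (4 (1 + sum |F|))], the vector
   [y := ((t + d) I - N)^-1 1] satisfies [y = F (1 - d y)], whence [d y <= 1/3]
   and [((t - d) I - N) y = 1 - 2 d y > 0]. *)
Lemma semipositive_shift_open n (N : 'M[R]_n) t :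
  mxle 0 N -> t%:M - N \in unitmx ->
  exists2 d, 0 < d &
    semipositive ((t + d)%:M - N) -> semipositive ((t - d)%:M - N).
Proof.
case: n N => [|n] N N0 Nt; first by exists 1 => // _; exists 0 => -[].
pose K := 1 + \sum_i \sum_j `|invmx (t%:M - N) i j|.
have K0 : 0 < K by rewrite ltr_pwDl ?sumr_ge0 // => i _; rewrite sumr_ge0.
have d0 : 0 < (4 * K)^-1 by rewrite invr_gt0 mulr_gt0.
exists (4 * K)^-1 => // Ntd; set d := (4 * K)^-1.
pose A := (t + d)%:M - N; pose one := const_mx 1 : 'cV[R]_n.+1.
have ZA : Zmatrix A := Zmatrix_shift _ N0.
pose y := invmx A *m one.
have Ay : A *m y = one by rewrite mulmxA mulmxV ?mul1mx // Zmatrix_unitmx.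
have y0 : mxpos y.
  apply: (Zmatrix_mxpos ZA); last by rewrite Ay => i j; rewrite mxE.
  by apply: (Zmatrix_monotone ZA Ntd); rewrite Ay; apply/mxge0P => i j; rewrite mxE.
clearbody y.
have Nty : (t%:M - N) *m y = one - d *: y.
  apply/matrixP => i j; have /matrixP/(_ i j) := Ay.
  by rewrite !mul_shift_mxE !mxE; lra.
have [i0 _ ymax] := @arg_maxP _ _ _ ord0 xpredT (fun i => y i 0) erefl.
have yF : y = invmx (t%:M - N) *m (one - d *: y) by rewrite -Nty mulKmx.
have yi0 := fixpoint_max_entry_le d0 (mxposW y0) (fun j => ymax j erefl) yF.
have dyi0 : d * y i0 0 <= 3^-1.
  have Kd : K * d = 4^-1 by rewrite /d invfM mulrCA divff ?gt_eqF // mulr1.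
  have y_le : y i0 0 <= 4 / 3 * K.
    by move: yi0; rewrite -/K mulrDr mulr1 mulrA Kd; lra.
  apply: le_trans (ler_wpM2l (ltW d0) y_le) _.
  suff -> : d * (4 / 3 * K) = 3^-1 by [].
  by rewrite /d; field; rewrite gt_eqF.
exists y => // i j; rewrite [j]ord1 mul_shift_mxE.
have /matrixP/(_ i 0) := Nty; rewrite mul_shift_mxE !mxE.
have : d * y i 0 <= d * y i0 0 := ler_wpM2l (ltW d0) (ymax i erefl).
lra.
Qed.

(* The [t >= s] at which [t I - N] fails to be semipositive are bounded; at
   their supremum [t I - N] is invertible, and [semipositive_shift_open] pushes
   semipositivity below the supremum. *)
Lemma semipositive_shift_spectral n (N : 'M[R]_n) s :
  mxle 0 N -> spectral_radius N < s -> semipositive (s%:M - N).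
Proof.
move=> N0 Ns; apply: contrapT => Nns.
pose T : set R := fun t => s <= t /\ ~ semipositive (t%:M - N).
have T_ub (t : R) : T t -> t <= 1 + \sum_i \sum_j N i j.
  move=> [_ Nnt]; rewrite leNgt; apply/negP => /ltW lt.
  exact/Nnt/(semipositive_shift_le lt)/semipositive_shift_large.
have supT : has_sup T by split; [exists s | exists (1 + \sum_i \sum_j N i j)].
have sT : s <= sup T by apply: sup_upper_bound.
have [d d0 Ndown] := semipositive_shift_open N0
  (spectral_radius_lt_unitmx (lt_le_trans Ns sT)).
have Nd : semipositive ((sup T + d)%:M - N).
  apply: contrapT => Nnd; have : sup T + d <= sup T.
    by apply: sup_upper_bound => //; split=> //; rewrite (le_trans sT) // lerDl ltW.
  by rewrite gerDl leNgt d0.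
have [t [_ Nnt] dt] := sup_adherent d0 supT.
exact/Nnt/(semipositive_shift_le (ltW dt))/Ndown.
Qed.

Lemma nonsingular_Mmatrix_Zmatrix n (A : 'M[R]_n) :
  nonsingular_Mmatrix A -> Zmatrix A.
Proof. by case=> s [N [N0 [-> _]]]; apply: Zmatrix_shift. Qed.

Lemma nonsingular_Mmatrix_semipositive n (A : 'M[R]_n) :
  nonsingular_Mmatrix A -> semipositive A.
Proof. by case=> s [N [N0 [-> Ns]]]; apply: semipositive_shift_spectral. Qed.

End SemipositiveShift.

Definition quad_step (R : pzSemiRingType) n (P Q X : 'M[R]_n) :=
  P *m (X *m X) + Q.

Lemma quad_step_ge (R : rcfType) n (P Q X : 'M[R]_n) :
  mxle 0 P -> mxle 0 X -> mxle Q (quad_step P Q X).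
Proof.
move=> P0 X0; rewrite -[X in mxle X]add0r; apply: mxleD => //.
by apply: mulmx_ge0 => //; apply: mulmx_ge0.
Qed.

Lemma quad_solventE (R : comUnitRingType) n (B C X : 'M[R]_n) :
  B \in unitmx ->
  X *m X + B *m X + C = 0 <-> quad_step (invmx B) (invmx B *m C) (- X) = - X.
Proof.
move=> uB; rewrite /quad_step mulmxN mulNmx opprK; split=> [sol | Xfix].
  have : invmx B *m (X *m X + B *m X + C) = 0 by rewrite sol mulmx0.
  rewrite !mulmxDr [invmx B *m (B *m X)]mulmxA mulVmx // mul1mx.
  by move=> /eqP; rewrite addrAC addr_eq0 => /eqP.
have : B *m (invmx B *m (X *m X) + invmx B *m C) = B *m (- X) by rewrite Xfix.
by rewrite mulmxDr !mulmxA mulmxV // !mul1mx mulmxN addrAC => ->; rewrite addNr.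
Qed.

Lemma dual_solventE (R : comUnitRingType) n (B C Y : 'M[R]_n) :
  B \in unitmx ->
  C *m (Y *m Y) + B *m Y + 1%:M = 0 <->
  quad_step (invmx B *m C) (invmx B) (- Y) = - Y.
Proof.
move=> uB; rewrite /quad_step mulmxN mulNmx opprK -mulmxA; split=> [sol | Yfix].
  have : invmx B *m (C *m (Y *m Y) + B *m Y + 1%:M) = 0 by rewrite sol mulmx0.
  rewrite !mulmxDr [invmx B *m (B *m Y)]mulmxA mulVmx // mul1mx mulmx1.
  by move=> /eqP; rewrite addrAC addr_eq0 => /eqP.
have : B *m (invmx B *m (C *m (Y *m Y)) + invmx B) = B *m (- Y) by rewrite Yfix.
by rewrite mulmxDr !mulmxA mulmxV // !mul1mx mulmxN addrAC => ->; rewrite addNr.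
Qed.

Lemma fin_exists_uniform (I : finType) (P : I -> nat -> Prop) :
  (forall i k l, (k <= l)%N -> P i k -> P i l) -> (forall i, exists k, P i k) ->
  exists K, forall i, P i K.
Proof.
move=> Pmono /fin_all_exists[f Pf]; exists (\max_i f i)%N => i.
exact: Pmono (leq_bigmax i) (Pf i).
Qed.

Section QuadraticFixpoint.
Variables (R : realType) (n : nat) (P Q : 'M[R]_n) (u : 'cV[R]_n).
Hypotheses (P0 : mxle 0 P) (Q0 : mxle 0 Q) (u0 : mxpos u).
Hypothesis PQu : mxle ((P + Q) *m u) u.

Definition quad_iter k := iter k (quad_step P Q) 0.

Lemma quad_step_ge0 X : mxle 0 X -> mxle 0 (quad_step P Q X).
Proof. by move=> X0; apply: mxle_trans Q0 _; apply: quad_step_ge. Qed.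

Lemma quad_step_mono X Y :
  mxle 0 X -> mxle X Y -> mxle (quad_step P Q X) (quad_step P Q Y).
Proof.
move=> X0 XY; apply: mxleD => //; apply: mxle_mul2l => //.
exact: mxle_trans (mxle_mul2l X0 XY) (mxle_mul2r (mxle_trans X0 XY) XY).
Qed.

Lemma quad_iter_ge0 k : mxle 0 (quad_iter k).
Proof. by elim: k => [|k IHk] //=; apply: quad_step_ge0. Qed.

Lemma quad_iter_mono k l : (k <= l)%N -> mxle (quad_iter k) (quad_iter l).
Proof.
have iterS j : mxle (quad_iter j) (quad_iter j.+1).
  elim: j => [|j IHj]; first exact: quad_iter_ge0.
  exact: quad_step_mono (quad_iter_ge0 j) IHj.
move/subnK <-; elim: (l - k)%N => [|m IHm] //.
exact: mxle_trans IHm (iterS _).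
Qed.

Lemma quad_iter_mulu k : mxle (quad_iter k *m u) ((P + Q) *m u).
Proof.
elim: k => [|k IHk].
  by rewrite mul0mx; apply: mulmx_ge0 (mxposW u0); apply: addmx_ge0.
rewrite /= /quad_step !mulmxDl -!mulmxA; apply: mxleD => //.
apply: mxle_mul2l => //.
apply: mxle_trans (mxle_trans IHk PQu).
exact: mxle_mul2l (quad_iter_ge0 k) (mxle_trans IHk PQu).
Qed.

Lemma quad_iter_bounded k i j : quad_iter k i j <= u i 0 / u j 0.
Proof.
rewrite ler_pdivlMr ?u0 //; apply: le_trans (PQu i 0).
apply: le_trans (quad_iter_mulu k i 0).
rewrite mxE (bigD1 j) //= lerDl sumr_ge0 // => l _.
by rewrite mulr_ge0 ?(ltW (u0 _ _)) //; move/mxge0P: (quad_iter_ge0 k); apply.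
Qed.

Definition quad_lim := \matrix_(i, j) sup (range (fun k => quad_iter k i j)).

Lemma has_sup_quad_iter i j : has_sup (range (fun k => quad_iter k i j)).
Proof.
split; first by exists (quad_iter 0 i j), 0%N.
by exists (u i 0 / u j 0) => _ [k _ <-]; apply: quad_iter_bounded.
Qed.

Lemma quad_iter_le_lim k : mxle (quad_iter k) quad_lim.
Proof.
move=> i j; rewrite !mxE.
by apply: (sup_upper_bound (has_sup_quad_iter i j)); exists k.
Qed.

Lemma quad_lim_ge0 : mxle 0 quad_lim.
Proof. exact: mxle_trans (quad_iter_ge0 0) (quad_iter_le_lim 0). Qed.

Lemma quad_lim_le X : (forall k, mxle (quad_iter k) X) -> mxle quad_lim X.
Proof.
move=> iterX i j; rewrite !mxE.
apply: ge_sup; first by exists (quad_iter 0 i j), 0%N.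
by move=> _ [k _ <-]; apply: iterX.
Qed.

Lemma quad_lim_approx e : 0 < e ->
  exists K, mxle quad_lim (quad_iter K + e *: const_mx 1).
Proof.
move=> e0; have [K iterK] : exists K, forall p : 'I_n * 'I_n,
    quad_lim p.1 p.2 - e < quad_iter K p.1 p.2.
  apply: fin_exists_uniform => [[i j] k l kl /lt_le_trans -> //|[i j]].
    exact: quad_iter_mono.
  have [_ [k _ <-]] := sup_adherent e0 (has_sup_quad_iter i j).
  by exists k; rewrite mxE.
by exists K => i j; have := iterK (i, j); rewrite !mxE mulr1 /=; lra.
Qed.

(* [quad_step L <= L] up to [e M] for every [e > 0], because
   [L L - X X = (L - X) L + X (L - X)] with [L - X <= e J] for [X] a late
   iterate. *)
Lemma quad_lim_step : quad_step P Q quad_lim = quad_lim.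
Proof.
set L := quad_lim; pose J := const_mx 1 : 'M[R]_n.
have J0 : mxle 0 J by apply/mxge0P => i j; rewrite mxE.
apply/matrixP => i j; apply/eqP; rewrite eq_le; apply/andP; split; last first.
  apply: quad_lim_le => -[|k]; first exact: quad_step_ge0 quad_lim_ge0.
  exact: quad_step_mono (quad_iter_ge0 k) (quad_iter_le_lim k).
pose M := P *m (J *m L + L *m J).
suff: mxle (quad_step P Q L) L by move/(_ i j); rewrite !mxE.
apply: (@mxle_addZ_gt0 _ _ _ _ _ M).
  apply: mulmx_ge0 => //.
  by apply: addmx_ge0; apply: mulmx_ge0 => //; apply: quad_lim_ge0.
move=> e e0; have [K LK] := quad_lim_approx e0.
set X := quad_iter K; have X0 : mxle 0 X := quad_iter_ge0 K.
have XL : mxle X L := quad_iter_le_lim K.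
have LX : mxle (L - X) (e *: J) by move=> a b; have := LK a b; rewrite !mxE; lra.
have LL : mxle (L *m L) (X *m X + e *: (J *m L + L *m J)).
  have -> : L *m L = X *m X + ((L - X) *m L + X *m (L - X)).
    by rewrite mulmxBl mulmxBr [X *m X + _]addrC addrA subrK subrK.
  apply: mxleD => //; rewrite scalerDr scalemxAl scalemxAr.
  apply: mxleD; first exact: mxle_mul2r quad_lim_ge0 LX.
  apply: mxle_trans (mxle_mul2l X0 LX) (mxle_mul2r _ XL).
  by apply/mxge0P => a b; rewrite !mxE mulr1 ltW.
apply: (@mxle_trans _ _ _ _ (quad_iter K.+1 + e *: M)); last first.
  by apply: mxleD => //; apply: quad_iter_le_lim.
rewrite /= -/X /quad_step /M addrAC scalemxAr -mulmxDr.
by apply: mxleD => //; apply: mxle_mul2l.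
Qed.

Lemma quad_lim_mulu : mxle (quad_lim *m u) ((P + Q) *m u).
Proof.
pose J := const_mx 1 : 'M[R]_n.
apply: (@mxle_addZ_gt0 _ _ _ _ _ (J *m u)).
  by apply: mulmx_ge0 (mxposW u0); apply/mxge0P => i j; rewrite mxE.
move=> e e0; have [K LK] := quad_lim_approx e0.
apply: mxle_trans (mxle_mul2r (mxposW u0) LK) _.
by rewrite mulmxDl -scalemxAl; apply: mxleD => //; apply: quad_iter_mulu.
Qed.

Lemma nonpos_fixpoint_bound X :
  quad_step P Q (- X) = - X -> mxle X 0 -> mxle (- quad_lim) X ->
  mxle X (- Q) /\ mxle (- (X *m u)) ((P + Q) *m u).
Proof.
move=> Xfix /mxle_oppr_ge0 X0 LX; split.
  by rewrite -[X]opprK -Xfix; apply/mxleN/quad_step_ge.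
rewrite -mulNmx; apply: mxle_trans quad_lim_mulu.
by apply: mxle_mul2r (mxposW u0) _; rewrite -[quad_lim]opprK; apply: mxleN.
Qed.

End QuadraticFixpoint.

Section MaximalSolvents.
Variables (R : realType) (n : nat) (B C : 'M[R]_n) (u : 'cV[R]_n).
Hypotheses (Bns : nonsingular_Mmatrix B) (BiC0 : mxle 0 (invmx B *m C)).
Hypotheses (u0 : mxpos u) (v0 : mxpos ((B - C - 1%:M) *m u)).

Local Notation Bi := (invmx B).
Local Notation b := (u - invmx B *m ((B - C - 1%:M) *m u)).

Let ZB := nonsingular_Mmatrix_Zmatrix Bns.
Let sB := nonsingular_Mmatrix_semipositive Bns.
Let uB : B \in unitmx := Zmatrix_unitmx ZB sB.
Let Bi0 : mxle 0 Bi := Zmatrix_invmx_ge0 ZB sB.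

Lemma residualE : b = (Bi + Bi *m C) *m u.
Proof.
rewrite !mulmxBl !mulmxBr mulmxA mulVmx // mul1mx mulmxDl -mulmxA.
by rewrite !opprB addrCA [u + _]addrC subrK.
Qed.

Lemma residual_lt i : b i 0 < u i 0.
Proof.
have Biv0 : mxpos (Bi *m ((B - C - 1%:M) *m u)).
  apply: (Zmatrix_mxpos ZB); first exact: mulmx_ge0 (mxposW v0).
  by rewrite mulmxA mulmxV // mul1mx.
by move: (Biv0 i 0); set w := Bi *m _; rewrite !mxE; lra.
Qed.

Lemma residual_le : mxle b u.
Proof. by move=> i j; rewrite [j]ord1; apply: ltW; apply: residual_lt. Qed.

Lemma max_quad_solvent_bound Phi : max_nonpos_solvent_quad B C Phi ->
  mxle Phi (- (Bi *m C)) /\ mxle (- (Phi *m u)) b.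
Proof.
case=> /(quad_solventE _ _ uB) Phi_fix Phi0 Phi_max.
have PQu : mxle ((Bi + Bi *m C) *m u) u by rewrite -residualE; apply: residual_le.
rewrite residualE; apply: nonpos_fixpoint_bound Phi_fix Phi0 _ => //.
apply: Phi_max; last by apply/mxle_oppr_le0; apply: quad_lim_ge0 PQu.
by apply/(quad_solventE _ _ uB); rewrite opprK (quad_lim_step Bi0 BiC0 u0 PQu).
Qed.

Lemma max_dual_solvent_bound Psi : max_nonpos_solvent_dual B C Psi ->
  mxle Psi (- Bi) /\ mxle (- (Psi *m u)) b.
Proof.
case=> /(dual_solventE _ _ uB) Psi_fix Psi0 Psi_max.
have PQu : mxle ((Bi *m C + Bi) *m u) u.
  by rewrite addrC -residualE; apply: residual_le.
rewrite residualE addrC; apply: nonpos_fixpoint_bound Psi_fix Psi0 _ => //.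
apply: Psi_max; last by apply/mxle_oppr_le0; apply: quad_lim_ge0 PQu.
by apply/(dual_solventE _ _ uB); rewrite opprK (quad_lim_step BiC0 Bi0 u0 PQu).
Qed.

End MaximalSolvents.

Theorem theorem3p4 (R : realType) (n : nat) (B C Phi Psi : 'M[R]_n)
  (u : 'cV[R]_n) :
  nonsingular_Mmatrix B ->
  Mmatrix C ->
  mxle 0 (invmx B *m C) ->
  nonsingular_Mmatrix (B - C - 1%:M) ->
  max_nonpos_solvent_quad B C Phi ->
  max_nonpos_solvent_dual B C Psi ->
  mxpos u ->
  mxpos ((B - C - 1%:M) *m u) ->
  let v := (B - C - 1%:M) *m u in
  (* (a) *)
  ((mxle Phi (- (invmx B *m C)) /\ mxle (- (invmx B *m C)) 0) /\
   mxle (- (Phi *m u)) (u - invmx B *m v) /\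
   (mxle Psi (- invmx B) /\ mxle (- invmx B) 0) /\
   mxle (- (Psi *m u)) (u - invmx B *m v)) /\
  (* (b) *)
  (spectral_radius Phi < 1 /\ spectral_radius Psi < 1) /\
  (* (c) *)
  (nonsingular_Mmatrix (1%:M - Phi *m Psi) /\
   nonsingular_Mmatrix (1%:M - Psi *m Phi)).
Proof.
move=> Bns _ BiC0 _ Phi_max Psi_max u0 v0 v.
have Bi0 := Zmatrix_invmx_ge0 (nonsingular_Mmatrix_Zmatrix Bns)
  (nonsingular_Mmatrix_semipositive Bns).
have b_lt := residual_lt Bns v0; have b_le := residual_le Bns v0.
have [PhiB Phiu] := max_quad_solvent_bound Bns BiC0 u0 v0 Phi_max.
have [PsiB Psiu] := max_dual_solvent_bound Bns BiC0 u0 v0 Psi_max.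
have [[_ Phi0 _] [_ Psi0 _]] := (Phi_max, Psi_max).
have lt_u X : mxle (- (X *m u)) (u - invmx B *m v) ->
    forall i, (- (X *m u)) i 0 < u i 0.
  by move=> Xu i; apply: le_lt_trans (Xu i 0) (b_lt i).
do ![split] => //; try by apply/mxle_oppr_le0.
- exact: spectral_radius_lt1_le0 Phi0 u0 (lt_u _ Phiu).
- exact: spectral_radius_lt1_le0 Psi0 u0 (lt_u _ Psiu).
- apply: nonsingular_Mmatrix_1sub (mulmx_le0 Phi0 Psi0) u0 _ => i.
  exact: le_lt_trans (mulmx_le0_mulu Phi0 Phiu Psiu b_le i 0) (b_lt i).
- apply: nonsingular_Mmatrix_1sub (mulmx_le0 Psi0 Phi0) u0 _ => i.
  exact: le_lt_trans (mulmx_le0_mulu Psi0 Psiu Phiu b_le i 0) (b_lt i).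
Qed.
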